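(* Let $\epsilon\in(0,1)$. Let $G=(V,E)$ be a graph with minimum degree at least $2$ having a vertex of degree at least $3$, let $R\subseteq V$ and $k,\ell\ge 0$. Define $\omega(v)=\deg(v)-2$ for $v\notin R$ and $\omega(v)=0$ for $v\in R$, and sample a vertex $v\in V$ with probability $\omega(v)/\omega(V)$. If there exists a riafd-set $F$ of $G$ of size $k$ with $\deg(F)\ge \frac{4-2\epsilon}{1-\epsilon}(k+\ell)$, then the sampled vertex belongs to $F$ with probability at least $\frac{1}{3-\epsilon}$.
   Context: For $X\subseteq V$, $\deg(X)=\sum_{v\in X}\deg(v)$ and $\omega(X)=\sum_{v\in X}\omega(v)$. A graph is an $\ell$-forest if deleting at most $\ell$ of its edges yields a forest. Given $G$, $R$ and $\ell$, a riafd-set is a set $F\subseteq V\setminus R$ that is independent in $G$ and such that $G-F$ is an $\ell$-forest. *)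

From mathcomp Require Import all_boot all_order all_algebra.
Set Implicit Arguments. Unset Strict Implicit. Unset Printing Implicit Defensive.
Import Order.TTheory GRing.Theory Num.Theory.

Section Graphs.
Variables (T : finType) (e : rel T).

Definition simple_graph : Prop := symmetric e /\ irreflexive e.

Definition deg (v : T) : nat := #|[set u | e v u]|.

Definition degS (X : {set T}) : nat := \sum_(v in X) deg v.

Definition independent (F : {set T}) : Prop :=
  forall x y, x \in F -> y \in F -> ~~ e x y.

Definition forest_on (S : {set T}) (r : rel T) : Prop :=
  forall c : seq T, {subset c <= S} -> uniq c -> 2 < size c -> ~~ cycle r c.

Definition del_edges (S : {set T}) (D : {set {set T}}) : rel T :=
  fun x y => [&& x \in S, y \in S, e x y & [set x; y] \notin D].

Definition l_forest (S : {set T}) (l : nat) : Prop :=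
  exists D : {set {set T}}, #|D| <= l /\ forest_on S (del_edges S D).

Definition riafd (R F : {set T}) (l : nat) : Prop :=
  [/\ F \subset ~: R, independent F & l_forest (~: F) l].

Definition omega (R : {set T}) (v : T) : nat := if v \in R then 0 else deg v - 2.
Definition omegaS (R X : {set T}) : nat := \sum_(v in X) omega R v.

End Graphs.

From mathcomp Require Import all_boot all_order all_algebra zify lra.
Import Order.TTheory GRing.Theory Num.Theory.
Set Implicit Arguments.
Unset Strict Implicit.
Unset Printing Implicit Defensive.

(* Since F avoids R, omega(F) = deg(F) - 2k, while omega(V) <= deg(V) - 2|V|.
   Deleting at most l edges turns G - F into a forest, so G - F has at most
   |V \ F| + l edges and deg(V) <= 2 deg(F) + 2 |V \ F| + 2 l; hence
   omega(V) <= 2 deg(F) - 2k + 2l.  The degree hypothesis yields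
   (1 - eps) omega(F) >= 2 (k + l), whence (3 - eps) omega(F) >= omega(V). *)

Lemma card_set_pred_sum (T : finType) (A : {pred T}) (P : pred T) :
  #|[set y in A | P y]| = \sum_(y in A) P y.
Proof.
by rewrite -sum1dep_card big_mkcondr /=; apply: eq_bigr => y _; case: (P y).
Qed.

Lemma leq_sum_subset (T : finType) (A B : {pred T}) (f : T -> nat) :
  {subset A <= B} -> \sum_(v in A) f v <= \sum_(v in B) f v.
Proof.
by move=> AB; apply: (sub_le_big leqnn (fun x y => leq_addr y x)) => v /AB.
Qed.

Lemma sum_setT (T : finType) (f : T -> nat) : \sum_(v in [set: T]) f v = \sum_v f v.
Proof. by apply: eq_bigl => v; rewrite inE. Qed.

Lemma sum_setC_split (T : finType) (A : {set T}) (f : T -> nat) :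
  \sum_v f v = \sum_(v in A) f v + \sum_(v in ~: A) f v.
Proof. by rewrite -sum_setT (big_setID A) setTI setTD. Qed.

Section Forest.
Variables (T : finType) (r : rel T).
Hypotheses (r_sym : symmetric r) (r_irr : irreflexive r).

Definition simple_path_in (S : {set T}) (x : T) (p : seq T) : bool :=
  [&& all [in S] (x :: p), uniq (x :: p) & path r x p].

Lemma forest_on_sub (S S' : {set T}) :
  S' \subset S -> forest_on S r -> forest_on S' r.
Proof. by move=> /subsetP sS'S fo c cS'; apply: fo => z /cS' /sS'S. Qed.

Lemma forest_path_extend (S : {set T}) x p y :
  forest_on S r -> simple_path_in S x p -> r x y -> y \in S ->
  y \notin take 1 p -> simple_path_in S y (x :: p).
Proof.
move=> fo /and3P[pS up rp] rxy yS yp.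
have yx : y != x by apply: contraTneq rxy => ->; rewrite r_irr.
have ynp : y \notin p.
  apply/negP=> y_p; move: yp up rp pS.
  case/path.splitP: y_p => [[|z p1] p2] yp up rp pS.
    by rewrite /= inE eqxx in yp.
  apply: (negP (fo (x :: rcons (z :: p1) y) _ _ _)).
  - by move=> w w_c; apply: (allP pS); rewrite -cat_cons mem_cat w_c.
  - by move: up; rewrite -cat_cons cat_uniq => /andP[].
  - by rewrite /= size_rcons.
  - rewrite /cycle rcons_path last_rcons r_sym rxy andbT.
    by move: rp; rewrite cat_path => /andP[].
rewrite /simple_path_in /= inE negb_or yS yx ynp r_sym rxy rp.
by move: pS up => /= -> ->.
Qed.

Lemma forest_leaf (S : {set T}) : forest_on S r -> S != set0 ->
  exists2 x, x \in S & #|[set y in S | r x y]| <= 1.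
Proof.
move=> fo /set0Pn[x0 x0S].
case: (boolP [exists x in S, #|[set y in S | r x y]| <= 1]) => [/exists_inP //|].
rewrite negb_exists_in => /forall_inP branching; exfalso.
(* Without a leaf every simple path extends, which is absurd in a finite set. *)
have long n : exists x p, simple_path_in S x p && (size p == n).
  elim: n => [|n [x [p /andP[sp /eqP <-]]]].
    by exists x0, [::]; rewrite /simple_path_in /= x0S.
  have xS : x \in S by case/and3P: sp => /andP[].
  have [y] : exists2 y, y \in [set y in S | r x y] & y \notin take 1 p.
    case: (boolP [exists y in [set y in S | r x y], y \notin take 1 p]).
      by move/exists_inP.
    rewrite negb_exists_in => /forall_inP sub; exfalso.
    have sub_card : #|[set y in S | r x y]| <= #|take 1 p|.
      by apply/subset_leq_card/subsetP => z /sub /negPn.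
    have two_nbrs : 1 < #|[set y in S | r x y]| by rewrite ltnNge branching.
    have := leq_trans two_nbrs (leq_trans sub_card (card_size _)).
    by case: (p) => [|? ?]; rewrite //= take0.
  rewrite inE => /andP[yS rxy] yp.
  by exists y, (x :: p); rewrite (forest_path_extend fo sp rxy yS yp) /=.
have [x [p /andP[/and3P[/allP pS up _] /eqP sz]]] := long #|S|.
suff : size (x :: p) <= #|S| by rewrite /= sz ltnn.
by rewrite -(card_uniqP up); apply/subset_leq_card/subsetP.
Qed.

Lemma forest_adj_sum (S : {set T}) :
  forest_on S r -> \sum_(x in S) \sum_(y in S) r x y <= 2 * #|S|.
Proof.
move: {2}#|S| (erefl #|S|) => n; elim: n S => [|n IH] S cS fo.
  by rewrite (cards0_eq cS) big_set0.
have [x xS leaf_x] : exists2 x, x \in S & #|[set y in S | r x y]| <= 1.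
  by apply: forest_leaf; rewrite // -card_gt0 cS.
have cSx : #|S :\ x| = n by move: cS; rewrite (cardsD1 x S) xS => -[].
have := IH _ cSx (forest_on_sub (subsetDl S [set x]) fo).
rewrite card_set_pred_sum in leaf_x.
have split_x y : \sum_(z in S) r y z = r y x + \sum_(z in S :\ x) r y z.
  by rewrite (big_setD1 x xS).
have rest : \sum_(y in S :\ x) \sum_(z in S) r y z =
    \sum_(y in S :\ x) r x y + \sum_(y in S :\ x) \sum_(z in S :\ x) r y z.
  by rewrite -big_split; apply: eq_bigr => y _; rewrite split_x r_sym.
rewrite (big_setD1 x xS) /= rest split_x r_irr.
rewrite split_x r_irr in leaf_x.
lia.
Qed.

End Forest.

Section Degrees.
Variables (T : finType) (e : rel T).

Lemma deg_sum v : deg e v = \sum_u e v u.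
Proof.
by rewrite /deg -sum1dep_card big_mkcond; apply: eq_bigr => u _; case: (e v u).
Qed.

Lemma sum_pairs_in_le (D : {set {set T}}) :
  \sum_v \sum_u ((u != v) && ([set v; u] \in D)) <= 2 * #|D|.
Proof.
rewrite pair_bigA /=.
set P := [set p : T * T | (p.2 != p.1) && ([set p.1; p.2] \in D)].
have -> : \sum_(p : T * T) ((p.2 != p.1) && ([set p.1; p.2] \in D)) = #|P|.
  by rewrite -sum1dep_card [RHS]big_mkcond; apply: eq_bigr => p _; case: (_ && _).
pose code (p : T * T) := ([set p.1; p.2], (enum_rank p.1 < enum_rank p.2)%N).
have code_inj : {in P &, injective code}.
  move=> [a b] [c d]; rewrite !inE /= => /andP[ba _] /andP[dc _] [ab_cd ltab].
  have : a \in [set c; d] /\ b \in [set c; d] by rewrite -ab_cd set21 set22.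
  rewrite !inE => -[/orP[]/eqP ea /orP[]/eqP eb]; subst a b; rewrite ?eqxx // in ba.
  move: ltab; case: (ltngtP (enum_rank c) (enum_rank d)) => //.
  move=> /val_inj/enum_rank_inj cd.
  by rewrite cd eqxx in dc.
rewrite -(card_in_imset code_inj) mulnC -[2]card_bool -cardsT -cardsX.
apply/subset_leq_card/subsetP => _ /imsetP[[a b] + ->].
by rewrite !inE /= => /andP[_ ->].
Qed.

Hypotheses (e_sym : symmetric e) (e_irr : irreflexive e).

Lemma sum_adj_le_degS (A B : {set T}) :
  \sum_(v in A) \sum_(u in B) e v u <= degS e B.
Proof.
rewrite exchange_big; apply: leq_sum => u _; rewrite deg_sum.
by under eq_bigr do rewrite e_sym; apply: leq_sum_subset.
Qed.

Lemma sum_adj_le_del_edges (S : {set T}) (D : {set {set T}}) :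
  \sum_(v in S) \sum_(u in S) e v u <=
  \sum_(v in S) \sum_(u in S) del_edges e S D v u + 2 * #|D|.
Proof.
set pair := fun v u => (u != v) && ([set v; u] \in D).
have pointwise v u : v \in S -> u \in S -> e v u <= del_edges e S D v u + pair v u.
  move=> vS uS; rewrite /del_edges /pair vS uS /=; case evu: (e v u) => //=.
  have -> : u != v by apply: contraTneq evu => ->; rewrite e_irr.
  by case: (_ \in D).
have pairs_S : \sum_(v in S) \sum_(u in S) pair v u <= 2 * #|D|.
  apply: (@leq_trans (\sum_(v in S) \sum_u pair v u)).
    by apply: leq_sum => v _; apply: leq_sum_subset.
  by apply: leq_trans (sum_pairs_in_le D); apply: leq_sum_subset.
apply: (@leq_trans (\sum_(v in S) \sum_(u in S) (del_edges e S D v u + pair v u))).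
  by apply: leq_sum => v vS; apply: leq_sum => u uS; apply: pointwise.
by under eq_bigr do rewrite big_split; rewrite big_split /= leq_add2l.
Qed.

Lemma degS_setT_le (F : {set T}) (l : nat) : l_forest e (~: F) l ->
  degS e [set: T] <= 2 * degS e F + 2 * #|~: F| + 2 * l.
Proof.
case=> D [D_le fo].
have r_sym : symmetric (del_edges e (~: F) D).
  move=> x y; rewrite /del_edges e_sym setUC.
  by case: (x \in ~: F); case: (y \in ~: F).
have r_irr : irreflexive (del_edges e (~: F) D).
  by move=> x; rewrite /del_edges e_irr !andbF.
have forest_H := forest_adj_sum r_sym r_irr fo.
have inner_H := sum_adj_le_del_edges (~: F) D.
have cross_H := sum_adj_le_degS (~: F) F.
have deg_H : \sum_(v in ~: F) deg e v =
    \sum_(v in ~: F) \sum_(u in F) e v u + \sum_(v in ~: F) \sum_(u in ~: F) e v u.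
  by rewrite -big_split; apply: eq_bigr => v _; rewrite deg_sum (sum_setC_split F).
rewrite /degS sum_setT (sum_setC_split F) deg_H -/(degS e F).
lia.
Qed.

End Degrees.

Section Weights.
Variables (T : finType) (e : rel T) (R : {set T}).

Lemma omegaS_add_card_le (A : {set T}) : {in A, forall v, 2 <= deg e v} ->
  omegaS e R A + 2 * #|A| <= degS e A.
Proof.
move=> deg2; rewrite mulnC -sum_nat_const -big_split /=; apply: leq_sum => v vA.
by have := deg2 v vA; rewrite /omega; case: (v \in R) => // /subnK ->.
Qed.

Lemma omegaS_add_card (A : {set T}) : A \subset ~: R ->
  {in A, forall v, 2 <= deg e v} -> omegaS e R A + 2 * #|A| = degS e A.
Proof.
move=> /subsetP AR deg2; rewrite mulnC -sum_nat_const -big_split /=.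
apply: eq_bigr => v vA; have := AR v vA; rewrite inE /omega => /negbTE ->.
by rewrite subnK ?deg2.
Qed.

Lemma degS_gt_card (A : {set T}) v0 : {in A, forall v, 2 <= deg e v} ->
  v0 \in A -> 3 <= deg e v0 -> 2 * #|A| < degS e A.
Proof.
move=> deg2 v0A deg_v0; rewrite /degS (big_setD1 v0 v0A) (cardsD1 v0 A) v0A /=.
have : \sum_(v in A :\ v0) 2 <= \sum_(v in A :\ v0) deg e v.
  by apply: leq_sum => v; rewrite inE => /andP[_ /deg2].
rewrite sum_nat_const; lia.
Qed.

End Weights.

Local Open Scope ring_scope.

Lemma sampling_ratio_bound (K : realFieldType) (eps a W d k l : K) :
  0 < eps < 1 -> 0 <= k -> 0 <= l ->
  a + 2 * k = d -> a <= W -> W + 2 * k <= 2 * d + 2 * l -> k < d + l ->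
  (4 - 2 * eps) / (1 - eps) * (k + l) <= d -> 1 / (3 - eps) <= a / W.
Proof.
move=> /andP[eps_gt0 eps_lt1] k_ge0 l_ge0 def_d aW Wle kdl.
rewrite mulrAC ler_pdivrMr ?subr_gt0 // => hd.
have key : 2 * (k + l) <= (1 - eps) * a by nra.
(* As a / 0 = 0, W > 0 is needed; [k < d + l] (from the vertex of degree 3)
   provides it. *)
have W_gt0 : 0 < W by nra.
rewrite ler_pdivlMr // mulrAC mul1r ler_pdivrMr; nra.
Qed.

Theorem lemma22 (K : realFieldType) (eps : K) (T : finType) (e : rel T)
    (R : {set T}) (k l : nat) :
  0 < eps < 1 ->
  simple_graph e ->
  (forall v : T, (2 <= deg e v)%N) ->
  (exists v : T, (3 <= deg e v)%N) ->
  (* the probability that the sampled vertex lies in F, where v is sampled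
     with probability omega(v)/omega(V) *)
  forall F : {set T}, riafd e R F l -> #|F| = k ->
    (degS e F)%:R >= (4 - 2 * eps) / (1 - eps) * (k + l)%:R ->
    \sum_(v in F) (omega e R v)%:R / (omegaS e R [set: T])%:R >= 1 / (3 - eps).
Proof.
move=> eps01 [e_sym e_irr] deg2 [v0 deg_v0] F [FR _ forest] cardF degF.
have omegaF := omegaS_add_card FR (in1W deg2).
have omegaV := omegaS_add_card_le R (A := [set: T]) (in1W deg2).
have degV_gt := degS_gt_card (in1W deg2) (in_setT v0) deg_v0.
have degV_le := degS_setT_le e_sym e_irr forest.
have omegaFV : (omegaS e R F <= omegaS e R [set: T])%N.
  by apply: leq_sum_subset => v _; rewrite inE.
have cardV := cardsC F; rewrite cardsT cardF in cardV omegaV degV_gt.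
rewrite -mulr_suml -natr_sum natrD in degF *.
apply: sampling_ratio_bound eps01 _ _ _ _ _ _ degF => //.
- by rewrite -natrM -natrD -cardF omegaF.
- by rewrite ler_nat.
- by rewrite -!natrM -!natrD ler_nat; lia.
- by rewrite -natrD ltr_nat; lia.
Qed.
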